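(* Assume the setting and Algorithm 2 described in the context, with $|Q|\ge2$, and suppose $L$ is convex. Take $n_1=\Theta(\frac{M^2}{\varepsilon_1^2}\log|Q|)$ and $n_2=\Theta\big(\frac{M^2}{\varepsilon_1^2\varepsilon_2^2}\log|Q|\log(\frac{M\log|Q|}{\varepsilon_1\varepsilon_2})\big)$, with suitable absolute constants. Then with probability at least $14/15$: if Algorithm 2 outputs a distribution $\mu'_D$ during the outer iteration with value $\ell$, then $\mathrm{Loss}(\mu'_D)\le\ell+\frac{2\varepsilon_1}{3}$.
   Context: Setting. $X$ is a countable set and $p$ is a probability distribution on $X$. For a distribution $q$ on $X$, $q_x$ is the mass of $x$ and $\mathrm{supp}(q)=\{x:q_x>0\}$. An invalidity function $\mathrm{Inv}:X\to\{0,1\}$ is given with $\mathrm{Inv}(x)=0$ for all $x\in\mathrm{supp}(p)$. For a distribution $q$, $\mathrm{Inv}(q)=\mathbb{E}_{x\sim q}[\mathrm{Inv}(x)]$. Fix $M>0$ and a monotone non-increasing function $L:[0,1]\to[0,M]$, and set $\mathrm{Loss}(q)=\mathbb{E}_{x\sim p}[L(q_x)]$. The learner may draw i.i.d. samples from $p$ and may query $\mathrm{Inv}(x)$ at any point. $Q$ is a finite family of probability distributions on $X$. A fixed point $x^*$ with $\mathrm{Inv}(x^* )=0$ is available. Algorithm 2 (parameters $\varepsilon_1,\varepsilon_2,\alpha,n_1,n_2$): (1) Draw $n_1$ i.i.d. samples from $p$. For every $q\in Q$ let $\overline{\mathrm{Loss}}(q)$ be the average of $L(q_x)$ over these samples.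 (2) For $\ell=0,\varepsilon_1/3,2\varepsilon_1/3,\dots$ (the multiples of $\varepsilon_1/3$ in $[0,M]$, in increasing order): (a) Set $D=\{q\in Q:\overline{\mathrm{Loss}}(q)\le\ell\}$. (b) While $D\neq\emptyset$: - Let $\mu_D=\frac1{|D|}\sum_{q\in D}q$. - Let $w_D(x)=\Pr_{q\sim\mathrm{Unif}(D)}[\varepsilon_1 q_x<3M\mu_D(x)]$. - Draw $n_2$ i.i.d. samples $x_1,\dots,x_{n_2}$ from $\mu_D$ and query their invalidity. - If $\frac1{n_2}\sum_{i}\mathrm{Inv}(x_i)w_D(x_i)\le\alpha+\frac{4\varepsilon_2}{5}$, output $\mu'_D$ and stop. Here $\mu'_D$ draws $x\sim\mu_D$, returns $x$ with probability $w_D(x)$, and returns $x^*$ otherwise. - Otherwise, remove from $D$ every $q$ with $\frac1{n_2}\sum_i\mathrm{Inv}(x_i)\frac{q_{x_i}}{\mu_D(x_i)}\mathbb{I}[\varepsilon_1q_{x_i}<3M\mu_D(x_i)]>\alpha+\frac{\varepsilon_2}{5}$. *)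

From Stdlib Require Import Reals Lra Lia List ZArith ClassicalEpsilon.
Open Scope R_scope.

(* The countable ground set X is modelled by nat.
   A (probability) distribution on X is a function nat -> R. *)
Definition is_dist (q : nat -> R) : Prop :=
  (forall x, 0 <= q x) /\ infinite_sum q 1.

(* Expectation of f under q : the value of the series sum_x q x * f x
   (chosen by classical choice; all series used below converge). *)
Definition Ex (q : nat -> R) (f : nat -> R) : R :=
  epsilon (inhabits 0) (fun s => infinite_sum (fun x => q x * f x) s).

(* Expectation of F over n i.i.d. samples drawn from q. *)
Fixpoint ExN (q : nat -> R) (n : nat) (F : list nat -> R) : R :=
  match n with
  | O => F nil
  | S m => Ex q (fun x => ExN q m (fun xs => F (x :: xs)))
  end.

Definition rsum (l : list R) : R := fold_right Rplus 0 l.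

Definition emp_avg (xs : list nat) (g : nat -> R) : R :=
  rsum (map g xs) / INR (length xs).

Definition indR (b : bool) : R := if b then 1 else 0.
Definition ltR (a b : R) : R := if Rlt_dec a b then 1 else 0.

Definition Loss (p : nat -> R) (L : R -> R) (q : nat -> R) : R :=
  Ex p (fun x => L (q x)).

Definition mu (D : list (nat -> R)) (x : nat) : R :=
  rsum (map (fun q => q x) D) / INR (length D).

Definition wD (eps1 M : R) (D : list (nat -> R)) (x : nat) : R :=
  rsum (map (fun q => ltR (eps1 * q x) (3 * M * mu D x)) D) / INR (length D).

(* mu'_D : draw x ~ mu_D, keep it with probability w_D(x), else return xstar *)
Definition mu' (eps1 M : R) (D : list (nat -> R)) (xstar : nat) (x : nat) : R :=
  mu D x * wD eps1 M D x
  + (if Nat.eq_dec x xstar then Ex (mu D) (fun y => 1 - wD eps1 M D y) else 0).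

Definition test_stat (Inv : nat -> bool) (eps1 M : R) (D : list (nat -> R))
  (xs : list nat) : R :=
  emp_avg xs (fun x => indR (Inv x) * wD eps1 M D x).

Definition score (Inv : nat -> bool) (eps1 M : R) (D : list (nat -> R))
  (xs : list nat) (q : nat -> R) : R :=
  emp_avg xs (fun x => indR (Inv x) * (q x / mu D x)
                       * ltR (eps1 * q x) (3 * M * mu D x)).

Definition remove_step (Inv : nat -> bool) (eps1 eps2 alpha M : R)
  (D : list (nat -> R)) (xs : list nat) : list (nat -> R) :=
  filter (fun q => if Rle_dec (score Inv eps1 M D xs q) (alpha + eps2 / 5)
                   then true else false) D.

Definition bad_output (p : nat -> R) (L : R -> R) (eps1 M : R)
  (D : list (nat -> R)) (xstar : nat) (l : R) : R :=
  ltR (l + 2 * eps1 / 3) (Loss p L (mu' eps1 M D xstar)).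

(* Probability that the while-loop (2b) run on D within outer iteration l,
   followed (if D becomes empty) by the remaining outer iterations whose
   bad-probability is [rest], produces a bad output, truncated after [fuel]
   while-iterations (non-terminated runs count as not bad). *)
Fixpoint pbad_inner (p : nat -> R) (Inv : nat -> bool) (L : R -> R)
  (xstar : nat) (eps1 eps2 alpha M : R) (n2 : nat)
  (fuel : nat) (l : R) (D : list (nat -> R)) (rest : R) : R :=
  match fuel with
  | O => 0
  | S f =>
    match D with
    | nil => rest
    | _ :: _ =>
      ExN (mu D) n2 (fun xs =>
        if Rle_dec (test_stat Inv eps1 M D xs) (alpha + 4 * eps2 / 5)
        then bad_output p L eps1 M D xstar l
        else pbad_inner p Inv L xstar eps1 eps2 alpha M n2 f l
               (remove_step Inv eps1 eps2 alpha M D xs) rest)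
    end
  end.

Definition emp_loss (L : R -> R) (s1 : list nat) (q : nat -> R) : R :=
  emp_avg s1 (fun x => L (q x)).

Definition levels (eps1 M : R) : list R :=
  map (fun j => INR j * eps1 / 3)
      (seq 0 (S (Z.to_nat (Int_part (3 * M / eps1))))).

Fixpoint pbad_outer (p : nat -> R) (Inv : nat -> bool) (L : R -> R)
  (Q : list (nat -> R)) (xstar : nat) (eps1 eps2 alpha M : R) (n2 : nat)
  (fuel : nat) (s1 : list nat) (ls : list R) : R :=
  match ls with
  | nil => 0
  | l :: ls' =>
    pbad_inner p Inv L xstar eps1 eps2 alpha M n2 fuel l
      (filter (fun q => if Rle_dec (emp_loss L s1 q) l then true else false) Q)
      (pbad_outer p Inv L Q xstar eps1 eps2 alpha M n2 fuel s1 ls')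
  end.

(* Probability (truncated at [fuel] while-iterations per outer iteration)
   that Algorithm 2 outputs some mu'_D during the outer iteration with value l
   and Loss(mu'_D) > l + 2 eps1/3.  Monotone in fuel; its supremum over fuel
   is the exact probability of this event. *)
Definition prob_bad (p : nat -> R) (Inv : nat -> bool) (L : R -> R)
  (Q : list (nat -> R)) (xstar : nat) (eps1 eps2 alpha M : R) (n1 n2 : nat)
  (fuel : nat) : R :=
  ExN p n1 (fun s1 =>
    pbad_outer p Inv L Q xstar eps1 eps2 alpha M n2 fuel s1 (levels eps1 M)).

Definition nonincreasing01 (L : R -> R) : Prop :=
  forall x y, 0 <= x -> x <= y -> y <= 1 -> L y <= L x.

Definition convex01 (L : R -> R) : Prop :=
  forall x y t, 0 <= x <= 1 -> 0 <= y <= 1 -> 0 <= t <= 1 ->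
    L (t * x + (1 - t) * y) <= t * L x + (1 - t) * L y.

Definition ceilN (r : R) : nat := Z.to_nat (up r).

From Stdlib Require Import Reals Lra Lia List ZArith Classical ClassicalEpsilon FunctionalExtensionality.
Open Scope R_scope.

(* With probability at least 14/15 the first-stage sample gives every q in Q an empirical
   loss of at least Loss(q) - eps1/3: a Chernoff bound for each q and a union bound over Q,
   where n1 >= 360 (M/eps1)^2 ln|Q| makes the failure probability at most |Q|^-4 <= 1/16.
   On that event every q surviving at level l has Loss(q) <= l + eps1/3, whatever the while
   loop does.  It remains to bound Loss(mu'_D)
   by the average loss over D plus eps1/3, pointwise in x: mu'_D(x) >= mu_D(x) w_D(x) and L
   is nonincreasing; the q rejected by w_D at x have q_x >= 3 M mu_D(x) / eps1, so they form
   a fraction 1 - w_D(x) <= eps1/(3M) of D and convexity gives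
   L(mu_D(x) w_D(x)) <= L(mu_D(x)) + eps1/3; finally Jensen bounds L(mu_D(x)) by the
   average of the L(q_x). *)

Lemma Rabs_le_inv a b : Rabs a <= b -> -b <= a <= b.
Proof. unfold Rabs; destruct (Rcase_abs a); lra. Qed.

Lemma exp_le_exp x y : x <= y -> exp x <= exp y.
Proof. intros [H|H]; [left; apply exp_increasing; auto|rewrite H; right; auto]. Qed.

Lemma exp_INR_mul n x : exp (INR n * x) = exp x ^ n.
Proof.
  induction n as [|n IH]; [simpl; rewrite Rmult_0_l, exp_0; auto|].
  rewrite S_INR, Rmult_plus_distr_r, Rmult_1_l, exp_plus, IH; simpl; ring.
Qed.

(* From [exp (-z) >= 1 - z] and [(1 + z + 2 z^2)(1 - z) >= 1] for [|z| <= 1/2]. *)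
Lemma exp_le_quadratic z : Rabs z <= 1/2 -> exp z <= 1 + z + 2 * z ^ 2.
Proof.
  intros Hz; apply Rabs_le_inv in Hz.
  pose proof (exp_ineq1_le (- z)) as Hneg; rewrite exp_Ropp in Hneg.
  pose proof (exp_pos z) as Hpos.
  assert (Hexp : exp z * (1 - z) <= 1).
  { apply Rmult_le_reg_l with (/ exp z); [apply Rinv_0_lt_compat; auto|].
    rewrite <- Rmult_assoc, Rinv_l, Rmult_1_l, Rmult_1_r by lra; lra. }
  assert (Hquad : 1 <= (1 + z + 2 * z ^ 2) * (1 - z)).
  { simpl; assert (0 <= z * z * (1 - 2 * z)) by (apply Rmult_le_pos; nra); nra. }
  apply Rmult_le_reg_r with (1 - z); nra.
Qed.

Section InfiniteSums.
Implicit Types (u v : nat -> R).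

Lemma infinite_sum_ext u v l : (forall n, u n = v n) -> infinite_sum u l -> infinite_sum v l.
Proof. intros H; replace v with u; [auto|apply functional_extensionality; auto]. Qed.

Lemma infinite_sum_const0 : infinite_sum (fun _ => 0) 0.
Proof.
  intros e he; exists 0%nat; intros n _.
  rewrite (sum_eq_R0 _ n) by reflexivity; unfold Rdist; rewrite Rminus_diag, Rabs_R0; lra.
Qed.

Lemma infinite_sum_scal u l c : infinite_sum u l -> infinite_sum (fun n => u n * c) (l * c).
Proof.
  intros H; unfold infinite_sum.
  replace (sum_f_R0 (fun n => u n * c)) with (fun n => sum_f_R0 u n * c).
  2:{ apply functional_extensionality; intros n; rewrite Rmult_comm, scal_sum; auto. }
  apply CV_mult; [exact H|].
  intros e he; exists 0%nat; intros; unfold Rdist; rewrite Rminus_diag, Rabs_R0; lra.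
Qed.

Lemma infinite_sum_plus u v a b :
  infinite_sum u a -> infinite_sum v b -> infinite_sum (fun n => u n + v n) (a + b).
Proof.
  intros Hu Hv; unfold infinite_sum.
  replace (sum_f_R0 (fun n => u n + v n)) with (fun n => sum_f_R0 u n + sum_f_R0 v n).
  2:{ apply functional_extensionality; intros n; rewrite sum_plus; auto. }
  apply CV_plus; assumption.
Qed.

Lemma infinite_sum_minus u v a b :
  infinite_sum u a -> infinite_sum v b -> infinite_sum (fun n => u n - v n) (a - b).
Proof.
  intros Hu Hv; unfold infinite_sum.
  replace (sum_f_R0 (fun n => u n - v n)) with (fun n => sum_f_R0 u n - sum_f_R0 v n).
  2:{ apply functional_extensionality; intros n; rewrite minus_sum; auto. }
  apply CV_minus; assumption.
Qed.

Lemma infinite_sum_le u v a b :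
  (forall n, u n <= v n) -> infinite_sum u a -> infinite_sum v b -> a <= b.
Proof.
  intros H Hu Hv; apply (Rle_cv_lim (Un := sum_f_R0 u) (Vn := sum_f_R0 v)); auto.
  intros n; apply sum_Rle; auto.
Qed.

Lemma infinite_sum_term_le u a k : (forall n, 0 <= u n) -> infinite_sum u a -> u k <= a.
Proof.
  intros H Hu; apply Rle_trans with (sum_f_R0 u k).
  - destruct k as [|k]; simpl; [lra|].
    assert (0 <= sum_f_R0 u k) by (apply cond_pos_sum; auto); lra.
  - apply sum_incr; auto.
Qed.

End InfiniteSums.

Lemma is_dist_range q x : is_dist q -> 0 <= q x <= 1.
Proof. intros [H0 H1]; split; auto; apply infinite_sum_term_le with (u := q); auto. Qed.

Section Expectation.
Variable q : nat -> R.
Hypothesis Hq : is_dist q.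
Implicit Types (f g : nat -> R).

(* Bounded functions have a convergent expectation: compare [q (f + B)] with [2 B q]. *)
Lemma Ex_spec f B : (forall x, Rabs (f x) <= B) -> infinite_sum (fun x => q x * f x) (Ex q f).
Proof.
  destruct Hq as [Hq0 Hq1]; intros Hf.
  assert (HB : 0 <= B) by (eapply Rle_trans; [apply Rabs_pos|apply (Hf 0%nat)]).
  apply (epsilon_spec (inhabits 0) (fun s => infinite_sum (fun x => q x * f x) s)).
  destruct (Rseries_CV_comp (fun x => q x * (f x + B)) (fun x => q x * (2 * B))) as [l Hl].
  - intros n; specialize (Hf n); apply Rabs_le_inv in Hf; split.
    + apply Rmult_le_pos; auto; lra.
    + apply Rmult_le_compat_l; auto; lra.
  - exists (1 * (2 * B)); apply infinite_sum_scal; auto.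
  - exists (l - 1 * B).
    apply infinite_sum_ext with (u := fun x => q x * (f x + B) - q x * B); [intros; ring|].
    apply infinite_sum_minus; auto; apply infinite_sum_scal; auto.
Qed.

Lemma Ex_unique f B s : (forall x, Rabs (f x) <= B) ->
  infinite_sum (fun x => q x * f x) s -> Ex q f = s.
Proof. intros Hf Hs; eapply uniqueness_sum; [eapply Ex_spec; eauto|exact Hs]. Qed.

Lemma Ex_const c : Ex q (fun _ => c) = c.
Proof.
  apply Ex_unique with (B := Rabs c); [intros; lra|].
  pose proof (infinite_sum_scal q 1 c (proj2 Hq)) as H; rewrite Rmult_1_l in H; exact H.
Qed.

Lemma Ex_le f g B : (forall x, Rabs (f x) <= B) -> (forall x, Rabs (g x) <= B) ->
  (forall x, f x <= g x) -> Ex q f <= Ex q g.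
Proof.
  intros Hf Hg H; eapply infinite_sum_le; [|eapply Ex_spec; eauto|eapply Ex_spec; eauto].
  intros n; apply Rmult_le_compat_l; auto; apply Hq.
Qed.

Lemma Ex_plus f g B : (forall x, Rabs (f x) <= B) -> (forall x, Rabs (g x) <= B) ->
  Ex q (fun x => f x + g x) = Ex q f + Ex q g.
Proof.
  intros Hf Hg; apply Ex_unique with (B := B + B).
  - intros x; eapply Rle_trans; [apply Rabs_triang|]; specialize (Hf x); specialize (Hg x); lra.
  - apply infinite_sum_ext with (u := fun x => q x * f x + q x * g x); [intros; ring|].
    apply infinite_sum_plus; eapply Ex_spec; eauto.
Qed.

Lemma Ex_scal f c B : (forall x, Rabs (f x) <= B) -> Ex q (fun x => c * f x) = c * Ex q f.
Proof.
  intros Hf; apply Ex_unique with (B := Rabs c * B).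
  - intros x; rewrite Rabs_mult; apply Rmult_le_compat_l; auto; apply Rabs_pos.
  - apply infinite_sum_ext with (u := fun x => q x * f x * c); [intros; ring|].
    rewrite Rmult_comm; apply infinite_sum_scal; eapply Ex_spec; eauto.
Qed.

Lemma Ex_range f lo hi : (forall x, lo <= f x <= hi) -> lo <= Ex q f <= hi.
Proof.
  intros Hf; set (B := Rabs lo + Rabs hi).
  assert (Hlo : Rabs lo <= B) by (unfold B; pose proof (Rabs_pos hi); lra).
  assert (Hhi : Rabs hi <= B) by (unfold B; pose proof (Rabs_pos lo); lra).
  assert (HB : forall x, Rabs (f x) <= B).
  { intros x; specialize (Hf x); apply Rabs_le.
    pose proof (Rabs_le_inv _ _ Hlo); pose proof (Rabs_le_inv _ _ Hhi); lra. }
  split.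
  - rewrite <- (Ex_const lo); apply Ex_le with (B := B); auto; intros x; apply Hf.
  - rewrite <- (Ex_const hi); apply Ex_le with (B := B); auto; intros x; apply Hf.
Qed.

End Expectation.

Section ListSums.
Context {A : Type}.
Implicit Types (l : list A) (f g : A -> R).

Lemma rsum_cons x (s : list R) : rsum (x :: s) = x + rsum s.
Proof. reflexivity. Qed.

Lemma rsum_le l f g : (forall a, In a l -> f a <= g a) -> rsum (map f l) <= rsum (map g l).
Proof.
  induction l as [|a l IH]; intros H; cbn [map]; [right; reflexivity|].
  rewrite !rsum_cons; apply Rplus_le_compat; [apply H; left; auto|].
  apply IH; intros; apply H; right; auto.
Qed.

Lemma rsum_affine l f c d :
  rsum (map (fun a => c * f a + d) l) = c * rsum (map f l) + d * INR (length l).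
Proof.
  induction l as [|a l IH]; cbn [map length]; [simpl; ring|].
  rewrite !rsum_cons, IH, S_INR; ring.
Qed.

Lemma rsum_const l c : rsum (map (fun _ => c) l) = c * INR (length l).
Proof.
  rewrite (map_ext _ (fun a => 0 * c + c)) by (intros; ring).
  rewrite (rsum_affine l (fun _ => c)); ring.
Qed.

Lemma rsum_bounds l f lo hi : (forall a, In a l -> lo <= f a <= hi) ->
  lo * INR (length l) <= rsum (map f l) <= hi * INR (length l).
Proof. intros H; rewrite <- !rsum_const; split; apply rsum_le; intros a Ha; apply H; auto. Qed.

Lemma rsum_abs l f B : (forall a, In a l -> Rabs (f a) <= B) ->
  Rabs (rsum (map f l)) <= B * INR (length l).
Proof.
  intros H; apply Rabs_le.
  assert (Hf : forall a, In a l -> -B <= f a <= B) by (intros a Ha; apply Rabs_le_inv; auto).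
  pose proof (rsum_bounds l f _ _ Hf); lra.
Qed.

Lemma rsum_nonneg l f : (forall a, In a l -> 0 <= f a) -> 0 <= rsum (map f l).
Proof.
  intros H; pose proof (rsum_le l (fun _ => 0) f H) as Hle; rewrite rsum_const in Hle; lra.
Qed.

Lemma rsum_ge_term l f a : (forall b, In b l -> 0 <= f b) -> In a l -> f a <= rsum (map f l).
Proof.
  induction l as [|b l IH]; intros H Ha; [destruct Ha|]; cbn [map]; rewrite rsum_cons.
  assert (0 <= f b) by (apply H; left; auto).
  assert (0 <= rsum (map f l)) by (apply rsum_nonneg; intros; apply H; right; auto).
  destruct Ha as [<-|Ha]; [lra|].
  assert (f a <= rsum (map f l)) by (apply IH; auto; intros; apply H; right; auto); lra.
Qed.

Lemma length_pos_INR l : l <> nil -> 1 <= INR (length l).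
Proof.
  destruct l as [|a l]; [congruence|]; intros _; cbn [length]; rewrite S_INR.
  pose proof (pos_INR (length l)); lra.
Qed.

Lemma avg_range l f lo hi : l <> nil -> (forall a, In a l -> lo <= f a <= hi) ->
  lo <= rsum (map f l) / INR (length l) <= hi.
Proof.
  intros Hl H; pose proof (length_pos_INR l Hl); pose proof (rsum_bounds l f _ _ H).
  split; [apply Rmult_le_reg_r with (INR (length l))|apply Rmult_le_reg_r with (INR (length l))];
    try lra; unfold Rdiv; rewrite Rmult_assoc, Rinv_l by lra; lra.
Qed.

Lemma Ex_rsum q l (F : A -> nat -> R) B : is_dist q ->
  (forall a x, In a l -> Rabs (F a x) <= B) ->
  Ex q (fun x => rsum (map (fun a => F a x) l)) = rsum (map (fun a => Ex q (F a)) l).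
Proof.
  intros Hq; induction l as [|a l IH]; intros H; cbn [map]; [apply Ex_const; auto|].
  assert (HB : 0 <= B) by (eapply Rle_trans; [apply Rabs_pos|apply (H a 0%nat (or_introl eq_refl))]).
  assert (Hn : 0 <= INR (length l)) by apply pos_INR.
  rewrite rsum_cons, <- IH by (intros; apply H; right; auto).
  rewrite <- (Ex_plus q Hq (F a) _ (B * INR (S (length l)))); [reflexivity| |].
  - intros x; eapply Rle_trans; [apply (H a x (or_introl eq_refl))|]; rewrite S_INR; nra.
  - intros x; eapply Rle_trans; [apply rsum_abs with (B := B); intros; apply H; right; auto|].
    rewrite S_INR; lra.
Qed.

End ListSums.

Definition bounded_on_samples (n : nat) (F : list nat -> R) (B : R) : Prop :=
  forall xs, length xs = n -> Rabs (F xs) <= B.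

Lemma bounded_on_samples_cons n F B x :
  bounded_on_samples (S n) F B -> bounded_on_samples n (fun xs => F (x :: xs)) B.
Proof. intros H xs Hl; apply H; simpl; lia. Qed.

Section SampleExpectation.
Variable q : nat -> R.
Hypothesis Hq : is_dist q.

Lemma ExN_ext n F G : (forall xs, length xs = n -> F xs = G xs) -> ExN q n F = ExN q n G.
Proof.
  revert F G; induction n as [|n IH]; intros F G H; simpl; [apply H; reflexivity|].
  f_equal; apply functional_extensionality; intros x.
  apply IH; intros xs Hl; apply H; simpl; lia.
Qed.

Lemma ExN_range n F lo hi : (forall xs, length xs = n -> lo <= F xs <= hi) ->
  lo <= ExN q n F <= hi.
Proof.
  revert F; induction n as [|n IH]; intros F H; simpl; [apply H; reflexivity|].
  apply Ex_range; auto; intros x; apply IH; intros xs Hl; apply H; simpl; lia.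
Qed.

Lemma ExN_const n c : ExN q n (fun _ => c) = c.
Proof. induction n as [|n IH]; simpl; [reflexivity|rewrite IH; apply Ex_const; auto]. Qed.

Lemma ExN_bound n F B : bounded_on_samples n F B -> Rabs (ExN q n F) <= B.
Proof. intros H; apply Rabs_le, ExN_range; intros xs Hl; apply Rabs_le_inv, H; auto. Qed.

Lemma ExN_le n F G B : bounded_on_samples n F B -> bounded_on_samples n G B ->
  (forall xs, length xs = n -> F xs <= G xs) -> ExN q n F <= ExN q n G.
Proof.
  revert F G; induction n as [|n IH]; intros F G HF HG H; simpl; [apply H; reflexivity|].
  apply Ex_le with (B := B); auto.
  - intros x; apply ExN_bound, bounded_on_samples_cons; auto.
  - intros x; apply ExN_bound, bounded_on_samples_cons; auto.
  - intros x; apply IH; try apply bounded_on_samples_cons; auto.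
    intros xs Hl; apply H; simpl; lia.
Qed.

Definition prodl (g : nat -> R) (xs : list nat) : R := fold_right (fun x acc => g x * acc) 1 xs.

Lemma ExN_prodl g B n c : (forall x, Rabs (g x) <= B) ->
  ExN q n (fun xs => c * prodl g xs) = c * Ex q g ^ n.
Proof.
  intros Hg; revert c; induction n as [|n IH]; intros c; simpl; [ring|].
  transitivity (Ex q (fun x => (c * Ex q g ^ n) * g x)).
  - f_equal; apply functional_extensionality; intros x.
    rewrite (ExN_ext n _ (fun xs => (c * g x) * prodl g xs)) by (intros; simpl; ring).
    rewrite IH; ring.
  - rewrite Ex_scal with (B := B); auto; ring.
Qed.

Lemma ExN_rsum {A} n (l : list A) (F : A -> list nat -> R) B :
  (forall a, In a l -> bounded_on_samples n (F a) B) ->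
  ExN q n (fun xs => rsum (map (fun a => F a xs) l)) = rsum (map (fun a => ExN q n (F a)) l).
Proof.
  revert F; induction n as [|n IH]; intros F H; simpl; [reflexivity|].
  transitivity (Ex q (fun x => rsum (map (fun a => ExN q n (fun xs => F a (x :: xs))) l))).
  - f_equal; apply functional_extensionality; intros x.
    apply IH; intros a Ha; apply bounded_on_samples_cons; auto.
  - apply Ex_rsum with (B := B); auto.
    intros a x Ha; apply ExN_bound, bounded_on_samples_cons; auto.
Qed.

End SampleExpectation.

Lemma ltR_range a b : 0 <= ltR a b <= 1.
Proof. unfold ltR; destruct Rlt_dec; lra. Qed.

Lemma convex01_jensen (L : R -> R) (s : list R) : convex01 L -> s <> nil ->
  (forall t, In t s -> 0 <= t <= 1) ->
  L (rsum s / INR (length s)) <= rsum (map L s) / INR (length s).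
Proof.
  intros HL; induction s as [|x s IH]; intros Hne H; [congruence|].
  destruct (list_eq_dec Req_EM_T s nil) as [->|Hs].
  { simpl; replace ((x + 0) / 1) with x by field; lra. }
  assert (Hk := length_pos_INR s Hs).
  assert (IH' := IH Hs (fun t Ht => H t (or_intror Ht))).
  assert (Havg : 0 <= rsum s / INR (length s) <= 1).
  { pose proof (avg_range s (fun t => t) 0 1 Hs) as A; rewrite map_id in A.
    apply A; intros; apply H; right; auto. }
  cbn [map length]; rewrite !rsum_cons, S_INR.
  set (k := INR (length s)) in *; set (t := 1 / (k + 1)).
  assert (Ht : 0 <= t <= 1).
  { unfold t; split; [apply Rmult_le_pos; [lra|left; apply Rinv_0_lt_compat; lra]|].
    apply Rmult_le_reg_r with (k + 1); [lra|]; unfold Rdiv; rewrite Rmult_assoc, Rinv_l by lra; lra. }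
  replace ((x + rsum s) / (k + 1)) with (t * x + (1 - t) * (rsum s / k)) by (unfold t; field; lra).
  eapply Rle_trans; [apply HL; auto; apply H; left; auto|].
  apply Rle_trans with (t * L x + (1 - t) * (rsum (map L s) / k)).
  - apply Rplus_le_compat_l, Rmult_le_compat_l; lra.
  - right; unfold t; field; lra.
Qed.

Section Mixture.
Variable D : list (nat -> R).
Hypothesis D_nonnil : D <> nil.
Hypothesis D_dist : forall q, In q D -> is_dist q.

Lemma mu_range x : 0 <= mu D x <= 1.
Proof. apply avg_range; auto; intros q Hq; apply is_dist_range; auto. Qed.

Lemma wD_range eps1 M x : 0 <= wD eps1 M D x <= 1.
Proof. apply avg_range; auto; intros; apply ltR_range. Qed.

Lemma infinite_sum_rsum_dists (l : list (nat -> R)) : (forall q, In q l -> is_dist q) ->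
  infinite_sum (fun x => rsum (map (fun q => q x) l)) (INR (length l)).
Proof.
  induction l as [|q l IH]; intros H; [apply infinite_sum_const0|].
  cbn [length map]; rewrite S_INR, Rplus_comm.
  apply infinite_sum_plus; [apply H; left; auto|apply IH; intros; apply H; right; auto].
Qed.

Lemma mu_dist : is_dist (mu D).
Proof.
  split; [intros; apply mu_range|].
  pose proof (length_pos_INR D D_nonnil).
  pose proof (infinite_sum_scal _ _ (/ INR (length D)) (infinite_sum_rsum_dists D D_dist)) as Hs.
  rewrite Rinv_r in Hs by lra; exact Hs.
Qed.

(* [mu D x * wD x] is a single term of the series [Ex (mu D) (wD)], so adding the
   rejected mass [1 - Ex (mu D) (wD)] at [xstar] keeps the total below 1. *)
Lemma mu'_range eps1 M xstar x : mu D x * wD eps1 M D x <= mu' eps1 M D xstar x <= 1.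
Proof.
  pose proof mu_dist as Hmu.
  assert (Hw : forall y, Rabs (wD eps1 M D y) <= 1).
  { intros y; apply Rabs_le; pose proof (wD_range eps1 M y); lra. }
  assert (Hrest : Ex (mu D) (fun y => 1 - wD eps1 M D y) = 1 - Ex (mu D) (wD eps1 M D)).
  { replace (fun y => 1 - wD eps1 M D y) with (fun y => 1 + (-1) * wD eps1 M D y)
      by (apply functional_extensionality; intros; ring).
    rewrite (Ex_plus _ Hmu (fun _ => 1) (fun y => (-1) * wD eps1 M D y) 1), Ex_const,
      (Ex_scal _ Hmu _ (-1) 1); auto; [ring| |].
    - intros; rewrite Rabs_R1; lra.
    - intros y; rewrite Rabs_mult, Rabs_left, Rmult_comm by lra; specialize (Hw y); lra. }
  assert (Hkept : mu D x * wD eps1 M D x <= Ex (mu D) (wD eps1 M D)).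
  { apply infinite_sum_term_le with (u := fun y => mu D y * wD eps1 M D y).
    - intros; apply Rmult_le_pos; [apply mu_range|apply wD_range].
    - apply Ex_spec with (B := 1); auto. }
  assert (Hmass : Ex (mu D) (wD eps1 M D) <= 1) by (apply (Ex_range _ Hmu _ 0 1), wD_range).
  assert (0 <= mu D x * wD eps1 M D x) by (apply Rmult_le_pos; [apply mu_range|apply wD_range]).
  unfold mu'; destruct Nat.eq_dec; rewrite ?Hrest; lra.
Qed.

Variables (L : R -> R) (M eps1 : R).
Hypothesis M_pos : 0 < M.
Hypothesis eps1_pos : 0 < eps1.
Hypothesis L_range : forall t, 0 <= t <= 1 -> 0 <= L t <= M.
Hypothesis L_nonincr : nonincreasing01 L.
Hypothesis L_convex : convex01 L.

(* Every q rejected by [wD] at x has [q x >= 3 M mu_D(x) / eps1], and the q average to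
   mu_D(x); hence the rejected fraction is at most [eps1 / (3 M)]. *)
Lemma rejected_fraction_le x : 3 * M * (1 - wD eps1 M D x) * mu D x <= eps1 * mu D x.
Proof.
  pose proof (length_pos_INR D D_nonnil) as Hn; set (n := INR (length D)) in *.
  set (m := mu D x); set (w := wD eps1 M D x); set (c := 3 * M * m / eps1).
  assert (Hsum : rsum (map (fun q => (- c) * ltR (eps1 * q x) (3 * M * m) + c) D)
                 <= rsum (map (fun q => q x) D)).
  { apply rsum_le; intros q Hq; pose proof (is_dist_range q x (D_dist q Hq)).
    unfold ltR; destruct Rlt_dec; [lra|].
    assert (c <= q x); [|lra].
    unfold c; apply Rmult_le_reg_r with eps1; auto.
    unfold Rdiv; rewrite Rmult_assoc, Rinv_l by lra; lra. }
  rewrite rsum_affine in Hsum; fold n in Hsum.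
  assert (Hm : rsum (map (fun q => q x) D) = n * m) by (unfold m, mu; fold n; field; lra).
  assert (Hw : rsum (map (fun q => ltR (eps1 * q x) (3 * M * m)) D) = n * w)
    by (unfold w, wD; fold n m; field; lra).
  rewrite Hm, Hw in Hsum.
  assert (Hcw : c * (1 - w) <= m) by (apply Rmult_le_reg_l with n; lra).
  unfold c in Hcw; apply Rmult_le_reg_r with (/ eps1); [apply Rinv_0_lt_compat; lra|].
  replace (eps1 * m * / eps1) with m by (field; lra); unfold Rdiv in Hcw; lra.
Qed.

Lemma L_mu'_le_avg xstar x :
  L (mu' eps1 M D xstar x) <= rsum (map (fun q => L (q x)) D) / INR (length D) + eps1 / 3.
Proof.
  pose proof (mu'_range eps1 M xstar x) as Hmu'; pose proof (rejected_fraction_le x) as Hrej.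
  pose proof (mu_range x) as Hm; pose proof (wD_range eps1 M x) as Hw.
  set (m := mu D x) in *; set (w := wD eps1 M D x) in *.
  assert (Hmw : 0 <= m * w <= 1) by nra.
  assert (Hmono : L (mu' eps1 M D xstar x) <= L (m * w)) by (apply L_nonincr; lra).
  assert (Hjensen : L m <= rsum (map (fun q => L (q x)) D) / INR (length D)).
  { pose proof (convex01_jensen L (map (fun q => q x) D) L_convex) as J.
    rewrite length_map, map_map in J; apply J.
    - destruct D; simpl; congruence.
    - intros t Ht; apply in_map_iff in Ht; destruct Ht as [q [<- Hq]]; apply is_dist_range; auto. }
  destruct (Req_dec m 0) as [Hm0|Hm0].
  - rewrite Hm0, Rmult_0_l in Hmono; rewrite Hm0 in Hjensen; lra.
  - assert (Hfrac : 3 * M * (1 - w) <= eps1).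
    { apply Rmult_le_reg_r with m; [lra|]; lra. }
    assert (Hconv : L (w * m + (1 - w) * 0) <= w * L m + (1 - w) * L 0) by (apply L_convex; lra).
    replace (w * m + (1 - w) * 0) with (m * w) in Hconv by ring.
    pose proof (L_range m Hm); assert (0 <= L 0 <= M) by (apply L_range; lra).
    nra.
Qed.

Lemma Loss_mu'_le (p : nat -> R) xstar l : is_dist p ->
  (forall q, In q D -> Loss p L q <= l + eps1 / 3) ->
  Loss p L (mu' eps1 M D xstar) <= l + 2 * eps1 / 3.
Proof.
  intros Hp HD; pose proof (length_pos_INR D D_nonnil) as Hn; set (n := INR (length D)) in *.
  assert (HLq : forall q x, In q D -> 0 <= L (q x) <= M)
    by (intros q x Hq; apply L_range, is_dist_range; auto).
  assert (HLq' : forall q x, In q D -> Rabs (L (q x)) <= M)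
    by (intros q x Hq; apply Rabs_le; pose proof (HLq q x Hq); lra).
  set (avg := fun x => / n * rsum (map (fun q => L (q x)) D)).
  assert (Havg : forall x, 0 <= avg x <= M)
    by (intros x; unfold avg; rewrite Rmult_comm; apply avg_range; auto).
  assert (Hsum : forall x, Rabs (rsum (map (fun q => L (q x)) D)) <= M * n)
    by (intros x; apply rsum_abs; auto).
  unfold Loss; apply Rle_trans with (Ex p (fun x => avg x + eps1 / 3)).
  - apply Ex_le with (B := M + eps1); auto.
    + intros x; pose proof (mu'_range eps1 M xstar x).
      assert (0 <= mu D x * wD eps1 M D x) by (apply Rmult_le_pos; [apply mu_range|apply wD_range]).
      assert (0 <= L (mu' eps1 M D xstar x) <= M) by (apply L_range; lra).
      apply Rabs_le; lra.
    + intros x; apply Rabs_le; pose proof (Havg x); lra.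
    + intros x; unfold avg; rewrite Rmult_comm; apply L_mu'_le_avg.
  - rewrite (Ex_plus p Hp avg (fun _ => eps1 / 3) (M + eps1)), Ex_const; auto.
    2:{ intros x; apply Rabs_le; pose proof (Havg x); lra. }
    2:{ intros; rewrite Rabs_right; lra. }
    unfold avg; rewrite (Ex_scal p Hp _ (/ n) (M * n)), (Ex_rsum p D _ M) by auto.
    assert (Hle : rsum (map (fun q => Ex p (fun x => L (q x))) D) <= (l + eps1 / 3) * n).
    { unfold n; rewrite <- rsum_const; apply rsum_le; auto. }
    apply Rle_trans with (/ n * ((l + eps1 / 3) * n) + eps1 / 3); [|right; field; lra].
    apply Rplus_le_compat_r, Rmult_le_compat_l; auto; left; apply Rinv_0_lt_compat; lra.
Qed.

End Mixture.

Section Algorithm.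
Variables (p : nat -> R) (Inv : nat -> bool) (L : R -> R) (Q : list (nat -> R)) (xstar : nat)
  (eps1 eps2 alpha M : R) (n2 : nat).
Hypothesis p_dist : is_dist p.
Hypothesis M_pos : 0 < M.
Hypothesis eps1_pos : 0 < eps1.
Hypothesis L_range : forall t, 0 <= t <= 1 -> 0 <= L t <= M.
Hypothesis L_nonincr : nonincreasing01 L.
Hypothesis L_convex : convex01 L.
Hypothesis Q_dist : forall q, In q Q -> is_dist q.

Lemma pbad_inner_range fuel l D rest : incl D Q -> 0 <= rest <= 1 ->
  0 <= pbad_inner p Inv L xstar eps1 eps2 alpha M n2 fuel l D rest <= 1.
Proof.
  revert D; induction fuel as [|fuel IH]; intros D HD Hrest; simpl; [lra|].
  destruct D as [|d D']; auto.
  apply ExN_range; [apply mu_dist; [congruence|intros; apply Q_dist, HD; auto]|].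
  intros xs _; destruct Rle_dec; [apply ltR_range|].
  apply IH; auto; intros q Hq; apply filter_In in Hq; apply HD, Hq.
Qed.

Lemma pbad_outer_range fuel s1 ls : 0 <= pbad_outer p Inv L Q xstar eps1 eps2 alpha M n2 fuel s1 ls <= 1.
Proof.
  induction ls as [|l ls IH]; simpl; [lra|].
  apply pbad_inner_range; auto; intros q Hq; apply filter_In in Hq; apply Hq.
Qed.

Definition underestimates (s1 : list nat) (q : nat -> R) : R :=
  ltR (emp_loss L s1 q) (Loss p L q - eps1 / 3).

Definition accurate_sample (s1 : list nat) : Prop :=
  forall q, In q Q -> Loss p L q <= emp_loss L s1 q + eps1 / 3.

Lemma pbad_inner_accurate s1 fuel l D : accurate_sample s1 ->
  (forall q, In q D -> In q Q /\ emp_loss L s1 q <= l) ->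
  pbad_inner p Inv L xstar eps1 eps2 alpha M n2 fuel l D 0 = 0.
Proof.
  intros Hs1; revert D; induction fuel as [|fuel IH]; intros D HD; simpl; [reflexivity|].
  destruct D as [|d D']; [reflexivity|].
  assert (Hmu : is_dist (mu (d :: D'))) by (apply mu_dist; [congruence|intros; apply Q_dist, HD; auto]).
  transitivity (ExN (mu (d :: D')) n2 (fun _ => 0)); [|apply ExN_const; auto].
  apply ExN_ext; intros xs _.
  destruct Rle_dec.
  - unfold bad_output, ltR; destruct Rlt_dec as [Hbad|]; [exfalso|reflexivity].
    apply (Rlt_not_le _ _ Hbad); apply Loss_mu'_le; auto.
    + congruence.
    + intros q Hq; apply Q_dist, HD; auto.
    + intros q Hq; destruct (HD q Hq) as [HqQ Hl]; pose proof (Hs1 q HqQ); lra.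
  - apply IH; intros q Hq; apply filter_In in Hq; apply HD, Hq.
Qed.

Lemma pbad_outer_accurate s1 fuel ls : accurate_sample s1 ->
  pbad_outer p Inv L Q xstar eps1 eps2 alpha M n2 fuel s1 ls = 0.
Proof.
  intros Hs1; induction ls as [|l ls IH]; simpl; [reflexivity|].
  rewrite IH; apply (pbad_inner_accurate s1); auto.
  intros q Hq; apply filter_In in Hq; destruct Hq as [HqQ Hl]; split; auto.
  destruct Rle_dec; [auto|discriminate].
Qed.

Lemma pbad_outer_le_underestimates fuel s1 ls :
  pbad_outer p Inv L Q xstar eps1 eps2 alpha M n2 fuel s1 ls
  <= rsum (map (underestimates s1) Q).
Proof.
  assert (Hnn : forall q, In q Q -> 0 <= underestimates s1 q) by (intros; apply ltR_range).
  destruct (classic (accurate_sample s1)) as [Hs1|Hs1].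
  - rewrite pbad_outer_accurate by auto; apply rsum_nonneg; auto.
  - apply not_all_ex_not in Hs1; destruct Hs1 as [q Hq].
    apply imply_to_and in Hq; destruct Hq as [HqQ Hlt]; apply Rnot_le_lt in Hlt.
    apply Rle_trans with (underestimates s1 q); [|apply rsum_ge_term; auto].
    unfold underestimates, ltR; destruct Rlt_dec; [apply pbad_outer_range|lra].
Qed.

Lemma prob_bad_le_union_bound n1 fuel :
  prob_bad p Inv L Q xstar eps1 eps2 alpha M n1 n2 fuel
  <= rsum (map (fun q => ExN p n1 (fun s1 => underestimates s1 q)) Q).
Proof.
  assert (HK : 0 <= INR (length Q)) by apply pos_INR.
  unfold prob_bad; rewrite <- (ExN_rsum p p_dist n1 Q (fun q s1 => underestimates s1 q) 1).
  2:{ intros q _ xs _; apply Rabs_le; pose proof (ltR_range (emp_loss L xs q) (Loss p L q - eps1 / 3));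
      unfold underestimates; lra. }
  apply ExN_le with (B := 1 + INR (length Q)); auto.
  - intros xs _; apply Rabs_le; pose proof (pbad_outer_range fuel xs (levels eps1 M)); lra.
  - intros xs _; apply Rabs_le.
    assert (Hb : forall q, In q Q -> 0 <= underestimates xs q <= 1) by (intros; apply ltR_range).
    pose proof (rsum_bounds Q (fun q => underestimates xs q) _ _ Hb); lra.
  - intros xs _; apply pbad_outer_le_underestimates.
Qed.

End Algorithm.

Lemma exp_rsum_prodl lam (h : nat -> R) xs :
  exp (lam * rsum (map h xs)) = prodl (fun x => exp (lam * h x)) xs.
Proof.
  induction xs as [|x xs IH]; cbn [map]; [change (exp (lam * 0) = 1); rewrite Rmult_0_r, exp_0; auto|].
  rewrite rsum_cons, Rmult_plus_distr_l, exp_plus, IH; reflexivity.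
Qed.

Lemma emp_avg_nonneg xs f : (forall x, 0 <= f x) -> 0 <= emp_avg xs f.
Proof.
  intros Hf; unfold emp_avg, Rdiv; apply Rmult_le_pos; [apply rsum_nonneg; auto|].
  destruct (length xs) as [|k]; [simpl; rewrite Rinv_0; lra|].
  left; apply Rinv_0_lt_compat, lt_0_INR; lia.
Qed.

Section LowerTail.
Variables (p f : nat -> R) (M : R).
Hypothesis p_dist : is_dist p.
Hypothesis M_pos : 0 < M.
Hypothesis f_range : forall x, 0 <= f x <= M.

Let a := Ex p f.

Lemma Ex_f_range : 0 <= a <= M.
Proof. apply Ex_range; auto. Qed.

Lemma mgf_centered_le lam : 0 <= lam -> lam * M <= 1/2 ->
  Ex p (fun x => exp (lam * (a - f x))) <= exp (2 * lam ^ 2 * M ^ 2).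
Proof.
  intros Hlam HlamM; pose proof Ex_f_range as Ha.
  set (c := 1 + lam * a + 2 * lam ^ 2 * M ^ 2).
  assert (Hc : 0 <= c) by (unfold c; assert (0 <= lam * a) by nra; nra).
  assert (HlM : 0 <= lam * M) by nra.
  assert (Hz : forall x, Rabs (lam * (a - f x)) <= lam * M).
  { intros x; pose proof (f_range x); rewrite Rabs_mult, Rabs_right by lra.
    apply Rmult_le_compat_l; auto; apply Rabs_le; lra. }
  set (B := exp (lam * M) + c + lam * M).
  apply Rle_trans with (Ex p (fun x => c + (- lam) * f x)).
  - apply Ex_le with (B := B); auto.
    + intros x; rewrite Rabs_right by (left; apply exp_pos).
      pose proof (exp_le_exp _ _ (proj2 (Rabs_le_inv _ _ (Hz x)))); unfold B; lra.
    + intros x; pose proof (f_range x); apply Rabs_le; unfold B; pose proof (exp_pos (lam * M)); nra.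
    + intros x; eapply Rle_trans; [apply exp_le_quadratic; pose proof (Hz x); lra|].
      assert (Hsq : (lam * (a - f x)) ^ 2 <= (lam * M) ^ 2) by (apply pow_maj_Rabs, Hz).
      rewrite Rpow_mult_distr in Hsq.
      unfold c; lra.
  - rewrite (Ex_plus p p_dist (fun _ => c) (fun x => - lam * f x) (c + lam * M)), Ex_const,
      (Ex_scal p p_dist f (- lam) M); auto.
    + fold a; unfold c; replace (1 + lam * a + 2 * lam ^ 2 * M ^ 2 + - lam * a)
        with (1 + 2 * lam ^ 2 * M ^ 2) by ring; apply exp_ineq1_le.
    + intros x; pose proof (f_range x); apply Rabs_le; lra.
    + intros; rewrite Rabs_right; lra.
    + intros x; pose proof (f_range x); apply Rabs_le; nra.
Qed.

(* Markov's inequality for [exp (lam * (n a - sum f))], whose expectation factorises over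
   the independent samples. *)
Lemma emp_avg_lower_tail_chernoff n t lam : (0 < n)%nat -> 0 <= t -> 0 <= lam -> lam * M <= 1/2 ->
  ExN p n (fun xs => ltR (emp_avg xs f) (a - t))
  <= exp (- lam * INR n * t) * exp (2 * lam ^ 2 * M ^ 2) ^ n.
Proof.
  intros Hn Ht Hlam HlamM; pose proof Ex_f_range as Ha.
  assert (HnR : 0 < INR n) by (apply lt_0_INR; lia).
  set (g := fun x => exp (lam * (a - f x))).
  assert (Hg : forall x, 0 <= g x <= exp (lam * M)).
  { intros x; unfold g; split; [left; apply exp_pos|apply exp_le_exp].
    pose proof (f_range x); nra. }
  assert (Hgabs : forall x, Rabs (g x) <= exp (lam * M))
    by (intros x; rewrite Rabs_right by (apply Rle_ge, Hg); apply Hg).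
  set (F := fun xs => exp (- lam * INR n * t) * prodl g xs).
  assert (HF : forall xs, length xs = n ->
            F xs = exp (lam * (rsum (map (fun x => a - f x) xs) - INR n * t))).
  { intros xs _; unfold F, g; rewrite <- exp_rsum_prodl, <- exp_plus; f_equal; ring. }
  assert (Hsum : forall xs, rsum (map (fun x => a - f x) xs) = a * INR (length xs) - rsum (map f xs)).
  { intros xs; rewrite (map_ext _ (fun x => (-1) * f x + a)) by (intros; ring).
    rewrite rsum_affine; ring. }
  set (B := 1 + exp (lam * (INR n * M))).
  apply Rle_trans with (ExN p n F).
  - apply ExN_le with (B := B); auto.
    + intros xs _; pose proof (ltR_range (emp_avg xs f) (a - t)); pose proof (exp_pos (lam * (INR n * M))).
      apply Rabs_le; unfold B; lra.
    + intros xs Hl; rewrite HF by auto; rewrite Rabs_right by (left; apply exp_pos).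
      assert (exp (lam * (rsum (map (fun x => a - f x) xs) - INR n * t)) <= exp (lam * (INR n * M)));
        [|unfold B; lra].
      apply exp_le_exp, Rmult_le_compat_l; auto.
      assert (Hb : forall x, In x xs -> - M <= a - f x <= M) by (intros x _; pose proof (f_range x); lra).
      pose proof (rsum_bounds xs _ _ _ Hb); rewrite Hl in *; nra.
    + intros xs Hl; rewrite HF by auto; unfold ltR; destruct Rlt_dec as [Hlt|]; [|left; apply exp_pos].
      eapply Rle_trans; [|apply exp_ineq1_le].
      unfold emp_avg in Hlt; rewrite Hl in Hlt; rewrite Hsum, Hl.
      assert (rsum (map f xs) < INR n * (a - t)).
      { apply Rmult_lt_reg_r with (/ INR n); [apply Rinv_0_lt_compat; auto|].
        replace (INR n * (a - t) * / INR n) with (a - t) by (field; lra); exact Hlt. }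
      assert (0 <= lam * (a * INR n - rsum (map f xs) - INR n * t)) by (apply Rmult_le_pos; nra); lra.
  - unfold F; rewrite (ExN_prodl p p_dist g _ n _ Hgabs).
    apply Rmult_le_compat_l; [left; apply exp_pos|].
    apply pow_incr; split; [apply (Ex_range p p_dist g 0 (exp (lam * M))), Hg|apply mgf_centered_le; auto].
Qed.

Lemma emp_avg_lower_tail n t : (0 < n)%nat -> 0 < t ->
  ExN p n (fun xs => ltR (emp_avg xs f) (a - t)) <= exp (- (INR n * t ^ 2 / (8 * M ^ 2))).
Proof.
  intros Hn Ht; pose proof Ex_f_range as Ha.
  destruct (Rle_lt_dec t (2 * M)) as [Hsmall|Hlarge].
  - eapply Rle_trans; [apply emp_avg_lower_tail_chernoff with (lam := t / (4 * M ^ 2)); auto; try lra|].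
    + apply Rmult_le_pos; [lra|left; apply Rinv_0_lt_compat; nra].
    + replace (t / (4 * M ^ 2) * M) with (t / (4 * M)) by (field; lra).
      apply Rmult_le_reg_r with (4 * M); [lra|]; unfold Rdiv; rewrite Rmult_assoc, Rinv_l by lra; lra.
    + rewrite <- exp_INR_mul, <- exp_plus; right; f_equal; field; lra.
  - rewrite (ExN_ext p n _ (fun _ => 0)); [rewrite ExN_const by auto; left; apply exp_pos|].
    intros xs _; unfold ltR; destruct Rlt_dec as [Hlt|]; [|reflexivity].
    pose proof (emp_avg_nonneg xs f (fun x => proj1 (f_range x))); lra.
Qed.

End LowerTail.

Lemma ceilN_ge r : 0 < r -> r <= INR (ceilN r).
Proof.
  intros Hr; unfold ceilN; destruct (archimed r) as [Hup _].
  assert (Hz : (0 <= up r)%Z) by (apply le_IZR; lra).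
  rewrite INR_IZR_INZ, Z2Nat.id by auto; lra.
Qed.

Lemma mul_exp_neg_le K z : 2 <= K -> 5 * ln K <= z -> K * exp (- z) <= 1 / 15.
Proof.
  intros HK Hz.
  assert (HK4 : exp (INR 4 * ln K) = K ^ 4) by (rewrite exp_INR_mul, exp_ln by lra; reflexivity).
  assert (H16 : 2 ^ 4 <= K ^ 4) by (apply pow_incr; lra).
  apply Rle_trans with (exp (ln K) * exp (- (5 * ln K))).
  - rewrite exp_ln by lra; apply Rmult_le_compat_l; [lra|apply exp_le_exp; lra].
  - rewrite <- exp_plus; replace (ln K + - (5 * ln K)) with (- (INR 4 * ln K)) by (simpl; ring).
    rewrite exp_Ropp, HK4; apply Rmult_le_reg_r with (K ^ 4); [simpl in *; lra|].
    rewrite Rinv_l by (simpl in *; lra); simpl in *; lra.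
Qed.

Theorem lemma5 :
  exists C1 C2 : R, 0 < C1 /\ 0 < C2 /\
  forall (p : nat -> R) (Inv : nat -> bool) (M : R) (L : R -> R)
         (Q : list (nat -> R)) (xstar : nat) (eps1 eps2 alpha : R),
    is_dist p ->
    (forall x, 0 < p x -> Inv x = false) ->
    0 < M ->
    (forall t, 0 <= t <= 1 -> 0 <= L t <= M) ->
    nonincreasing01 L ->
    convex01 L ->
    (forall q, In q Q -> is_dist q) ->
    (2 <= length Q)%nat ->
    Inv xstar = false ->
    0 < eps1 -> 0 < eps2 ->
    let K := INR (length Q) in
    let n1 := ceilN (C1 * (M ^ 2 / eps1 ^ 2) * ln K) in
    let n2 := ceilN (C2 * (M ^ 2 / (eps1 ^ 2 * eps2 ^ 2)) * ln K
                        * Rmax 1 (ln (M * ln K / (eps1 * eps2)))) in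
    forall fuel : nat,
      prob_bad p Inv L Q xstar eps1 eps2 alpha M n1 n2 fuel <= 1 / 15.
Proof.
  exists 360, 1; split; [lra|split; [lra|]].
  intros p Inv M L Q xstar eps1 eps2 alpha Hp _ HM HLrange HLnonincr HLconvex HQ HQ2 _ He1 _
    K n1 n2 fuel.
  assert (HK : 2 <= K) by (unfold K; apply (le_INR 2) in HQ2; simpl in HQ2; lra).
  assert (HlnK : 0 < ln K) by (rewrite <- ln_1; apply ln_increasing; lra).
  assert (Hscale : 0 < 360 * (M ^ 2 / eps1 ^ 2) * ln K).
  { repeat apply Rmult_lt_0_compat; try apply Rinv_0_lt_compat; try apply pow_lt; lra. }
  assert (Hn1 : 360 * (M ^ 2 / eps1 ^ 2) * ln K <= INR n1) by (apply ceilN_ge; auto).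
  assert (Hn1pos : (0 < n1)%nat) by (apply INR_lt; simpl; lra).
  set (z := INR n1 * (eps1 / 3) ^ 2 / (8 * M ^ 2)).
  eapply Rle_trans; [apply prob_bad_le_union_bound; auto|].
  apply Rle_trans with (rsum (map (fun _ => exp (- z)) Q)).
  - apply rsum_le; intros q Hq; apply (emp_avg_lower_tail p (fun x => L (q x)) M); auto; [|lra].
    intros x; apply HLrange, is_dist_range; auto.
  - rewrite rsum_const, Rmult_comm; fold K; apply mul_exp_neg_le; auto.
    apply Rle_trans with (360 * (M ^ 2 / eps1 ^ 2) * ln K * (eps1 / 3) ^ 2 / (8 * M ^ 2));
      [right; field; lra|].
    unfold z, Rdiv; apply Rmult_le_compat_r; [left; apply Rinv_0_lt_compat; nra|].
    apply Rmult_le_compat_r; [apply pow2_ge_0|exact Hn1].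
Qed.
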